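(* The linear map $\phi':\mathcal{H}_{WPP}\to\mathbf{WQSym}$ defined by $\phi'(P)=\sum_{g\in WLin(P)} g$ is a Hopf algebra isomorphism from $\mathcal{H}_{WPP}$ onto $(\mathbf{WQSym},.,\Delta)$; moreover $\phi'=\psi\circ\phi$, where $\phi(P)=\sum_{f\in Lin(P)}f$ and $\psi(f)=\sum_{g\prec f} g$.
   Context: A double poset is a finite set with two partial orders $\leq_1,\leq_2$. A weak plane poset is a double poset such that $x\leq_1 y$ and $x\leq_2 y$ imply $x=y$, and $x\preceq y\iff(x\leq_1 y$ or $x\leq_2 y)$ is a total quasi-order; $x\equiv y$ means $x\preceq y$ and $y\preceq x$; $x\ll y\iff(y\leq_1 x$ or $x\leq_2 y)$ is a total order, and $P$ is identified with $[n]$ so that $\ll$ is the natural order. $\mathcal{H}_{WPP}$ is the span of isomorphism classes of weak plane posets, with product $PQ$ on $P\sqcup Q$ ($\leq_1$ the disjoint union; $i\leq_2 j$ iff $i,j$ in the same factor and $i\leq_2 j$ there, or $i\in P,j\in Q$), unit the empty poset, and coproduct $\Delta(P)=\sum_O P_{|P\setminus O}\otimes P_{|O}$ over subsets $O$ upward closed for $\leq_1$. $Lin(P)$: surjections $f:[n]\to[k]$ with $i\leq_1 j\Rightarrow f(i)\leq f(j)$ and $f(i)=f(j)\Rightarrow i\equiv j$. $WLin(P)$: surjections $f:[n]\to[k]$ with $i\leq_1 j\Rightarrow f(i)\leq f(j)$ and ($i\leq_1 j$ and $f(i)=f(j)$) $\Rightarrow i\equiv j$. Surjections are identified with packed words $f(1)\cdots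 f(n)$ (words whose letters form $\{1,\dots,k\}$), which form a basis of $\mathbf{WQSym}$. For packed words $f,g$ of length $n$, $g\prec f$ means: $f(i)\leq f(j)\Rightarrow g(i)\leq g(j)$, and ($i<j$, $f(i)>f(j)$) $\Rightarrow g(i)>g(j)$. $pack$ replaces the letters of a word by their ranks. The product $.$ is $u.v=\sum w$ over packed words $w$ of length $|u|+|v|$ with $pack(w_1\cdots w_{|u|})=u$ and $pack(w_{|u|+1}\cdots)=v$ (e.g. $(1).(1)=(12)+(21)+(11)$). The coproduct is $\Delta(w)=\sum_{k=0}^{\max w} w_{|\leq k}\otimes pack(w_{|>k})$, with $w_{|\leq k}$, $w_{|>k}$ the subwords of letters $\leq k$, $>k$. *)

From HB Require Import structures.
From mathcomp Require Import all_boot all_order all_algebra.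
Set Implicit Arguments. Unset Strict Implicit. Unset Printing Implicit Defensive.
Import Order.TTheory GRing.Theory Num.Theory.

(* Formal finite linear combinations  sum_i c_i b_i  over a basis B.   *)
(* Two formal sums denote the same vector iff their coefficient        *)
(* functions agree.                                                    *)
Definition fsum (K : Type) (B : Type) := seq (K * B).

Section FSum.
Variable K : nzRingType.
Local Open Scope ring_scope.

Definition coef {B : eqType} (x : fsum K B) (b : B) : K :=
  \sum_(p <- x | p.2 == b) p.1.

Definition lin {B C : Type} (f : B -> fsum K C) (x : fsum K B) : fsum K C :=
  flatten [seq [seq (p.1 * q.1, q.2) | q <- f p.2] | p <- x].

Definition tens {B C : Type} (x : fsum K B) (y : fsum K C) : fsum K (B * C) :=
  [seq (p.1 * q.1, (p.2, q.2)) | p <- x, q <- y].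

Definition lin2 {B C D E : Type} (f : B -> fsum K D) (g : C -> fsum K E)
  (x : fsum K (B * C)) : fsum K (D * E) :=
  lin (fun bc => tens (f bc.1) (g bc.2)) x.

Definition ones {B : Type} (s : seq B) : fsum K B := [seq (1, b) | b <- s].
End FSum.

(* Double posets on [n] = {0,..,n-1} (position i stands for i+1).      *)
(* A double poset is (n, (R1, R2)) with R1, R2 the graphs of <=_1 and  *)
(* <=_2.  A weak plane poset is stored in its unique normal form where *)
(* << is the natural order of [n]; these normal forms are in bijection *)
(* with isomorphism classes of weak plane posets.       *)
Definition dpT (n : nat) : finType := ({set 'I_n * 'I_n} * {set 'I_n * 'I_n})%type.
Definition dposet := {n : nat & dpT n}.

Definition dsize (P : dposet) : nat := projT1 P.
Definition le1 (P : dposet) (i j : 'I_(dsize P)) : bool := (i, j) \in (projT2 P).1.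
Definition le2 (P : dposet) (i j : 'I_(dsize P)) : bool := (i, j) \in (projT2 P).2.
Definition qle (P : dposet) (i j : 'I_(dsize P)) : bool := le1 i j || le2 i j.
Definition qeq (P : dposet) (i j : 'I_(dsize P)) : bool := qle i j && qle j i.

Arguments le1 : clear implicits.
Arguments le2 : clear implicits.
Arguments qle : clear implicits.
Arguments qeq : clear implicits.

Definition is_porder (n : nat) (r : 'I_n -> 'I_n -> bool) : bool :=
  [&& [forall i, r i i],
      [forall i, forall j, r i j && r j i ==> (i == j)] &
      [forall i, forall j, forall k, r i j && r j k ==> r i k]].

Definition is_wpp (P : dposet) : bool :=
  [&& is_porder (le1 P), is_porder (le2 P),
      [forall i, forall j, le1 P i j && le2 P i j ==> (i == j)],
      [forall i, forall j, qle P i j || qle P j i],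
      [forall i, forall j, forall k, qle P i j && qle P j k ==> qle P i k] &
      (* << (y <=_1 x or x <=_2 y) is the natural (total) order of [n] *)
      [forall i, forall j, (le1 P j i || le2 P i j) == (i <= j)%N]].

Definition dp_empty : dposet := existT dpT 0 (set0, set0).

(* product P Q on P |_| Q : Q is placed after P *)
Definition dp_mul (P Q : dposet) : dposet :=
  let n := dsize P in let m := dsize Q in
  existT dpT (n + m)
   ([set ij : 'I_(n + m) * 'I_(n + m) |
       match split ij.1, split ij.2 with
       | inl a, inl b => le1 P a b
       | inr a, inr b => le1 Q a b
       | _, _ => false end],
    [set ij : 'I_(n + m) * 'I_(n + m) |
       match split ij.1, split ij.2 with
       | inl a, inl b => le2 P a b
       | inr a, inr b => le2 Q a b
       | inl _, inr _ => true
       | inr _, inl _ => false end]).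

(* restriction P_{|O}, relabelled by the (increasing) enumeration of O *)
Definition dp_restr (P : dposet) (O : {set 'I_(dsize P)}) : dposet :=
  existT dpT #|O|
   ([set ij : 'I_#|O| * 'I_#|O| | le1 P (enum_val ij.1) (enum_val ij.2)],
    [set ij : 'I_#|O| * 'I_#|O| | le2 P (enum_val ij.1) (enum_val ij.2)]).

Definition upclosed1 (P : dposet) (O : {set 'I_(dsize P)}) : bool :=
  [forall i, forall j, (i \in O) && le1 P i j ==> (j \in O)].

Definition dp_delta {K : nzRingType} (P : dposet) : fsum K (dposet * dposet) :=
  ones K (map (fun O : {set 'I_(dsize P)} => (dp_restr (setC O), dp_restr O))
            (filter (@upclosed1 P) (enum [set: {set 'I_(dsize P)}]))).

(* WQSym: packed words are seq nat with letters forming {1,..,k}.      *)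
Definition pack (w : seq nat) : seq nat :=
  [seq (index x (sort leq (undup w))).+1 | x <- w].
Definition packed (w : seq nat) : bool := pack w == w.

Fixpoint words (n k : nat) : seq (seq nat) :=
  if n is n'.+1 then [seq a :: w | a <- iota 1 k, w <- words n' k] else [:: [::]].

Definition pwords (n : nat) : seq (seq nat) := [seq w <- words n n | packed w].

Definition wmul_list (u v : seq nat) : seq (seq nat) :=
  [seq w <- pwords (size u + size v) |
     (pack (take (size u) w) == u) && (pack (drop (size u) w) == v)].
Definition wmul {K : nzRingType} (x y : fsum K (seq nat)) : fsum K (seq nat) :=
  lin (fun uv => ones K (wmul_list uv.1 uv.2)) (tens x y).

Definition wdelta {K : nzRingType} (w : seq nat) : fsum K (seq nat * seq nat) :=
  ones K [seq ([seq x <- w | (x <= k)%N], pack [seq x <- w | (k < x)%N])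
         | k <- iota 0 (\max_(x <- w) x).+1].

(* A packed word g of length n is the surjection i |-> nth 0 g i.      *)
Definition linb (P : dposet) (g : seq nat) : bool :=
  [forall i : 'I_(dsize P), forall j : 'I_(dsize P),
     (le1 P i j ==> (nth 0 g i <= nth 0 g j)%N) &&
     ((nth 0 g i == nth 0 g j) ==> qeq P i j)].

Definition wlinb (P : dposet) (g : seq nat) : bool :=
  [forall i : 'I_(dsize P), forall j : 'I_(dsize P),
     (le1 P i j ==> (nth 0 g i <= nth 0 g j)%N) &&
     (le1 P i j && (nth 0 g i == nth 0 g j) ==> qeq P i j)].

Definition Lin (P : dposet) : seq (seq nat) := [seq g <- pwords (dsize P) | linb P g].
Definition WLin (P : dposet) : seq (seq nat) := [seq g <- pwords (dsize P) | wlinb P g].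

Definition phi {K : nzRingType} (P : dposet) : fsum K (seq nat) := ones K (Lin P).
Definition phi' {K : nzRingType} (P : dposet) : fsum K (seq nat) := ones K (WLin P).

Definition precb (g f : seq nat) : bool :=
  all (fun i => all (fun j =>
      (((nth 0 f i <= nth 0 f j) ==> (nth 0 g i <= nth 0 g j)) &&
       ((i < j) && (nth 0 f j < nth 0 f i) ==> (nth 0 g j < nth 0 g i)))%N)
    (iota 0 (size f))) (iota 0 (size f)).

Definition psi {K : nzRingType} (f : seq nat) : fsum K (seq nat) :=
  ones K [seq g <- pwords (size f) | precb g f].

From HB Require Import structures.
From mathcomp Require Import all_boot all_order all_algebra zify.
Set Implicit Arguments. Unset Strict Implicit. Unset Printing Implicit Defensive.
Import GRing.Theory.

(* Write [canonical_word P] for the packed word recording the [preceq]-levels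
   of a weak plane poset [P].
   - [phi' = psi \o phi]: a word [g] of [WLin P] lies below exactly one [f] of
     [Lin P] for [\prec], namely [g] with its ties broken by [preceq].
   - A word lies in [WLin (P Q)] iff its two halves, once packed, lie in
     [WLin P] and [WLin Q]: exactly the terms of the product in [WQSym].
   - Cutting [w] of [WLin P] at the letter [k] gives a [<=_1]-upper set [O] and
     words of [WLin P_{|~O}] and [WLin P_{|O}]; gluing them back inverts the cut.
   - [phi'] is unitriangular: [canonical_word] is a bijection from weak plane
     posets onto packed words, [canonical_word P] lies in [WLin P], and every
     other word of [WLin P] has a larger inversion weight. *)

(** * Sequences and packed words *)

Lemma count_allpairs_pair (S T : eqType) (A : seq S) (B : seq T) a b :
  uniq A -> uniq B -> count_mem (a, b) [seq (x, y) | x <- A, y <- B] = (a \in A) && (b \in B).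
Proof.
move=> A_uniq B_uniq; rewrite count_uniq_mem ?allpairs_uniq // => [|[? ?] [? ?] _ _ [-> ->] //].
by congr nat_of_bool; apply/allpairsP/andP => [[[x y] /= [? ? [-> ->]]] //|[? ?]]; exists (a, b).
Qed.

Lemma count_flatten_map (B C : eqType) (t : B -> seq C) (p : pred B) s c :
  {in s, forall b, count_mem c (t b) = p b} ->
  count_mem c (flatten (map t s)) = count p s.
Proof.
move=> count_t; rewrite count_flatten -map_comp -sumn_count; congr sumn.
exact/eq_in_map.
Qed.

Lemma nth_map_enum n (F : 'I_n -> nat) (i : 'I_n) :
  nth 0 [seq F j | j <- enum 'I_n] i = F i.
Proof. by rewrite (nth_map i) ?size_enum_ord // nth_ord_enum. Qed.

Lemma size_map_enum n (F : 'I_n -> nat) : size [seq F j | j <- enum 'I_n] = n.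
Proof. by rewrite size_map size_enum_ord. Qed.

Lemma all_iota0 n (p : pred nat) : all p (iota 0 n) = [forall i : 'I_n, p i].
Proof.
rewrite -val_enum_ord all_map; apply/allP/forallP => [p_n i|p_n i _]; last exact: p_n.
by apply: p_n; rewrite mem_enum.
Qed.

Lemma ord_antisym n (i j : 'I_n) : i <= j -> j <= i -> i == j.
Proof. by move=> le_ij le_ji; rewrite -val_eqE /= eqn_leq le_ij le_ji. Qed.

Lemma lex_leq n a b x y : x <= n -> y <= n ->
  (a * n.+1 + x <= b * n.+1 + y) = (a < b) || (a == b) && (x <= y).
Proof.
move=> le_xn le_yn; case: (ltngtP a b) => [lt_ab|lt_ba|->] /=; last by rewrite leq_add2l.
  by apply/idP; nia.
by apply/negbTE; rewrite -ltnNge; nia.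
Qed.

Lemma map_nth_index (T : eqType) (e : seq T) (s : seq nat) : uniq e -> size e = size s ->
  [seq nth 0 s (index i e) | i <- e] = s.
Proof.
move=> e_uniq size_e; apply: (@eq_from_nth _ 0); rewrite size_map // => m lt_m.
have x0 : T by case: {+}e lt_m => [|x].
by rewrite (nth_map x0) ?index_uniq.
Qed.

Lemma index_leq s x y : sorted ltn s -> x \in s -> y \in s ->
  (index x s <= index y s) = (x <= y).
Proof.
move=> s_lt xs ys; have s_le : sorted leq s by move: s_lt; rewrite ltn_sorted_uniq_leq => /andP[].
apply/idP/idP => [|le_xy]; first exact: (sorted_leq_index leq_trans leqnn s_le).
rewrite leqNgt; apply/negP => /(sorted_ltn_index ltn_trans s_lt y x ys xs).
by rewrite ltnNge le_xy.
Qed.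

Lemma index_count s x : sorted ltn s -> x \in s ->
  index x s = count (fun y => y < x) s.
Proof.
move=> s_lt xs; have s_uniq : uniq s by apply: (sorted_uniq ltn_trans ltnn).
have lt_index : {in s, forall y, (y < x) = (index y s < index x s)}.
  by move=> y ys; rewrite !ltnNge index_leq.
rewrite (eq_in_count lt_index) -[X in count _ X](mkseq_nth 0 s) /mkseq count_map.
rewrite (@eq_in_count _ _ (fun j => j < index x s)); last first.
  by move=> j; rewrite mem_iota /= => j_lt; rewrite index_uniq.
rewrite -size_filter.
by have := filter_iota_ltn 0 (index_size x s); rewrite add0n => ->; rewrite size_iota.
Qed.

Lemma eq_size_undup_map (T : eqType) (F G : T -> nat) (s : seq T) :
  {in s &, forall a b, (F a == F b) = (G a == G b)} ->
  size (undup (map F s)) = size (undup (map G s)).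
Proof.
elim: s => //= a s IHs eqFG.
have eqFG' : {in s &, forall a b, (F a == F b) = (G a == G b)}.
  by move=> x y xs ys; apply: eqFG; rewrite inE ?xs ?ys orbT.
have -> : (F a \in map F s) = (G a \in map G s).
  apply/mapP/mapP => -[b bs /eqP eq_ab]; exists b => //; apply/eqP.
    by rewrite -eqFG ?inE ?bs ?eqxx ?orbT.
  by rewrite eqFG ?inE ?bs ?eqxx ?orbT.
by case: ifP => _ /=; rewrite IHs.
Qed.

Definition letters (w : seq nat) : seq nat := sort leq (undup w).

Lemma letters_sorted w : sorted ltn (letters w).
Proof.
by rewrite ltn_sorted_uniq_leq sort_uniq undup_uniq sort_sorted //; exact: leq_total.
Qed.

Lemma mem_letters w x : (x \in letters w) = (x \in w).
Proof. by rewrite mem_sort mem_undup. Qed.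

Lemma size_letters w : size (letters w) = size (undup w).
Proof. by rewrite size_sort. Qed.

Lemma size_pack s : size (pack s) = size s.
Proof. by rewrite size_map. Qed.

Lemma nth_pack s i : i < size s ->
  nth 0 (pack s) i = (index (nth 0 s i) (letters s)).+1.
Proof. by move=> lt_is; rewrite /pack (nth_map 0). Qed.

Lemma pack_leq s i j : i < size s -> j < size s ->
  (nth 0 (pack s) i <= nth 0 (pack s) j) = (nth 0 s i <= nth 0 s j).
Proof.
move=> lt_is lt_js.
by rewrite !nth_pack // ltnS index_leq ?letters_sorted // mem_letters mem_nth.
Qed.

Lemma pack_eq s i j : i < size s -> j < size s ->
  (nth 0 (pack s) i == nth 0 (pack s) j) = (nth 0 s i == nth 0 s j).
Proof. by move=> lt_is lt_js; rewrite !eqn_leq !pack_leq. Qed.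

Lemma eq_pack s t : size s = size t ->
  (forall i j, i < size s -> j < size s ->
     (nth 0 s i <= nth 0 s j) = (nth 0 t i <= nth 0 t j)) -> pack s = pack t.
Proof.
move=> eq_st eq_le; apply: (@eq_from_nth _ 0); first by rewrite !size_pack.
move=> i; rewrite size_pack => lt_is.
rewrite !nth_pack -?eq_st //; congr S.
rewrite !index_count ?letters_sorted ?mem_letters ?mem_nth -?eq_st //.
rewrite /letters !count_sort -!size_filter !filter_undup.
rewrite -[X in size (undup (filter _ X)) = _](mkseq_nth 0 s).
rewrite -[X in _ = size (undup (filter _ X))](mkseq_nth 0 t) /mkseq !filter_map -eq_st.
have -> : [seq j <- iota 0 (size s) | nth 0 t j < nth 0 t i] =
          [seq j <- iota 0 (size s) | nth 0 s j < nth 0 s i].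
  by apply: eq_in_filter => j; rewrite mem_iota /= => lt_js; rewrite !ltnNge eq_le.
apply/esym/eq_size_undup_map => a b.
rewrite !mem_filter !mem_iota /= => /andP[_ lt_as] /andP[_ lt_bs].
by rewrite !eqn_leq !eq_le.
Qed.

Lemma pack_idem s : pack (pack s) = pack s.
Proof.
apply: eq_pack; first by rewrite size_pack.
by move=> i j; rewrite size_pack => lt_is lt_js; rewrite pack_leq.
Qed.

Lemma packed_pack s : packed (pack s).
Proof. by rewrite /packed pack_idem. Qed.

Lemma packed_mem_size w x : packed w -> (x \in w) = (0 < x <= size (undup w)).
Proof.
move=> /eqP w_packed; rewrite -[in LHS]w_packed.
apply/mapP/idP => [[y yw ->]|/andP[x_gt0 x_le]].
  by rewrite ltnS /= -size_letters index_mem mem_letters.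
have lt_x : x.-1 < size (letters w) by rewrite size_letters prednK.
exists (nth 0 (letters w) x.-1); first by rewrite -mem_letters mem_nth.
by rewrite index_uniq ?sort_uniq ?undup_uniq // prednK.
Qed.

Lemma packed_max w : packed w -> \max_(x <- w) x = size (undup w).
Proof.
move=> w_packed; apply/eqP; rewrite eqn_leq; apply/andP; split.
  by apply/bigmax_leqP_seq => x; rewrite packed_mem_size // => /andP[].
case def_m: (size (undup w)) => [|m] //.
have m_w : m.+1 \in w by rewrite packed_mem_size // def_m leqnn.
exact: (@leq_bigmax_seq _ w xpredT id m.+1 m_w).
Qed.

Lemma packed_mem w x : packed w -> (x \in w) = (0 < x <= \max_(y <- w) y).
Proof. by move=> w_packed; rewrite packed_max // packed_mem_size. Qed.

Lemma packed_of_mem w m : (forall x, (x \in w) = (0 < x <= m)) -> packed w.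
Proof.
move=> mem_w.
have letters_w : letters w = iota 1 m.
  have iota_sorted : sorted leq (iota 1 m).
    by have := iota_ltn_sorted 1 m; rewrite ltn_sorted_uniq_leq => /andP[].
  rewrite /letters -[RHS](sorted_sort leq_trans iota_sorted).
  apply/(perm_sortP leq_total leq_trans anti_leq).
  apply: uniq_perm; rewrite ?undup_uniq ?iota_uniq // => x.
  by rewrite mem_undup mem_w mem_iota add1n ltnS.
apply/eqP; rewrite /pack -/(letters w) letters_w; apply: map_id_in => x.
rewrite mem_w => /andP[x_gt0 x_le].
have lt_x : x.-1 < m by rewrite prednK.
have := index_uniq 0 (leq_trans lt_x (eq_leq (esym (size_iota 1 m)))) (iota_uniq 1 m).
by rewrite nth_iota // add1n prednK // => ->; rewrite prednK.
Qed.

Lemma max_filter_leq w k : packed w -> k <= \max_(x <- w) x ->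
  \max_(x <- [seq x <- w | x <= k]) x = k.
Proof.
move=> w_packed le_k; apply/eqP; rewrite eqn_leq; apply/andP; split.
  by apply/bigmax_leqP_seq => x; rewrite mem_filter => /andP[].
case: k le_k => [|k] le_k //.
have k_w : k.+1 \in [seq x <- w | x <= k.+1] by rewrite mem_filter leqnn packed_mem // le_k.
exact: (@leq_bigmax_seq _ _ xpredT id k.+1 k_w).
Qed.

Lemma packed_filter_leq w k : packed w -> k <= \max_(x <- w) x ->
  packed [seq x <- w | x <= k].
Proof.
move=> w_packed le_k; apply: (@packed_of_mem _ k) => x.
rewrite mem_filter packed_mem //; apply/andP/andP => [[le_xk /andP[-> _]]|[-> le_xk]] //.
by rewrite (leq_trans le_xk le_k).
Qed.

Lemma pack_addn v k : pack [seq x + k | x <- v] = pack v.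
Proof.
apply: eq_pack; first by rewrite size_map.
by move=> i j; rewrite size_map => lt_i lt_j; rewrite !(nth_map 0) // leq_add2r.
Qed.

(* The letters of [w] above [k] are [k + 1, ..., max w], so packing them subtracts [k]. *)
Lemma filter_gtn_packed w k : packed w ->
  [seq x <- w | k < x] = [seq x + k | x <- pack [seq x <- w | k < x]].
Proof.
move=> w_packed; set s := [seq x <- w | k < x].
have gt_s x : x \in s -> k < x by rewrite mem_filter => /andP[].
have shift_packed : packed [seq x - k | x <- s].
  apply: (@packed_of_mem _ (\max_(y <- w) y - k)) => x.
  apply/mapP/idP => [[y /[dup] /gt_s lt_ky]|/andP[x_gt0 le_x]].
    by rewrite mem_filter packed_mem // => /andP[_ /andP[_ le_y]] ->; apply/andP; split; lia.
  exists (x + k); last by rewrite addnK.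
  by rewrite mem_filter packed_mem //; apply/andP; split; [|apply/andP; split]; lia.
have -> : pack s = [seq x - k | x <- s].
  rewrite -(eqP shift_packed); apply: eq_pack; first by rewrite size_map.
  move=> i j lt_i lt_j; rewrite !(nth_map 0) //.
  by rewrite leq_sub2rE // ltnW // gt_s // mem_nth.
rewrite -map_comp map_id_in // => x /gt_s lt_kx /=; lia.
Qed.

Lemma mem_words n k w :
  (w \in words n k) = (size w == n) && all (fun x => 0 < x <= k) w.
Proof.
elim: n w => [|n IHn] [|a w] //=; first by apply/allpairsP => -[[b v] /= [_ _]].
apply/allpairsP/idP => [[[b v] /= [b_k v_w [-> ->]]]|/andP[/eqP[size_w] /andP[a_k w_k]]].
  by move: v_w; rewrite IHn eqSS => /andP[-> ->]; rewrite andbT -mem_iota.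
by exists (a, w); rewrite /= ?mem_iota // IHn size_w eqxx.
Qed.

Lemma mem_pwords n w : (w \in pwords n) = packed w && (size w == n).
Proof.
rewrite mem_filter mem_words; case w_packed: (packed w) => //=.
case: eqP => //= <-; apply/allP => x; rewrite packed_mem_size // => /andP[-> x_le].
exact: leq_trans x_le (size_undup w).
Qed.

Lemma pwords_uniq n : uniq (pwords n).
Proof.
rewrite filter_uniq //; elim: {-2}n => //= m IHm.
by apply: allpairs_uniq => //; [exact: iota_uniq | move=> [a w] [b v] _ _ /= [-> ->]].
Qed.

(** * Formal sums *)

Section FormalSums.
Variable K : nzRingType.
Local Open Scope ring_scope.

Lemma coef_cons (B : eqType) (p : K * B) (x : fsum K B) b :
  coef (p :: x) b = (if p.2 == b then p.1 else 0) + coef x b.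
Proof. by rewrite /coef big_cons; case: (p.2 == b) => /=; rewrite ?add0r. Qed.

Lemma coef_cat (B : eqType) (x y : fsum K B) b : coef (x ++ y) b = coef x b + coef y b.
Proof. by rewrite /coef big_cat. Qed.

Lemma coef_ones (B : eqType) (s : seq B) b : coef (ones K s) b = (count_mem b s)%:R.
Proof.
elim: s => [|a s IHs]; first by rewrite /coef big_nil.
by rewrite /ones /= coef_cons -/(ones K s) IHs /= natrD; case: (a == b).
Qed.

Lemma coef_lin (B C : eqType) (f : B -> fsum K C) x c :
  coef (lin f x) c = \sum_(p <- x) p.1 * coef (f p.2) c.
Proof.
elim: x => [|p x IHx]; first by rewrite /coef !big_nil.
rewrite /lin /= coef_cat -/(lin f x) IHx big_cons; congr (_ + _).
by rewrite /coef big_map mulr_sumr.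
Qed.

Lemma eq_lin (B C : Type) (f g : B -> fsum K C) x : f =1 g -> lin f x = lin g x.
Proof. by move=> eq_fg; rewrite /lin; congr flatten; apply: eq_map => p; rewrite eq_fg. Qed.

Lemma lin_ones (B C : Type) (t : B -> seq C) (s : seq B) :
  lin (fun b => ones K (t b)) (ones K s) = ones K (flatten (map t s)).
Proof.
rewrite /lin /ones map_flatten -!map_comp; congr flatten; apply: eq_map => b /=.
by rewrite -map_comp; apply: eq_map => c /=; rewrite mul1r.
Qed.

Lemma tens_ones (B C : Type) (s : seq B) (t : seq C) :
  tens (ones K s) (ones K t) = ones K [seq (b, c) | b <- s, c <- t].
Proof.
rewrite /tens /ones allpairs_mapl allpairs_mapr map_allpairs.
by apply: eq_allpairs => b c; rewrite /= mulr1.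
Qed.

Lemma coef_notin (B : eqType) (x : fsum K B) b : b \notin map snd x -> coef x b = 0.
Proof.
move=> b_x; rewrite /coef big_seq_cond big1 // => p /andP[px /eqP p_b].
by rewrite -p_b (map_f snd px) in b_x.
Qed.

Lemma big_if_eq_uniq (B : eqType) (s : seq B) a (v : K) : uniq s ->
  \sum_(b <- s) (if a == b then v else 0) = if a \in s then v else 0.
Proof.
move=> s_uniq; case: ifP => a_s.
  by rewrite (bigD1_seq a) //= eqxx big1 ?addr0 // => b; rewrite eq_sym => /negbTE ->.
by rewrite big_seq big1 // => b b_s; case: eqP => // a_b; rewrite a_b b_s in a_s.
Qed.

Lemma sum_coef_undup (B : eqType) (x : fsum K B) (h : B -> K) :
  \sum_(p <- x) p.1 * h p.2 = \sum_(b <- undup (map snd x)) coef x b * h b.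
Proof.
have coef_h b : coef x b * h b = \sum_(p <- x) (if p.2 == b then p.1 * h p.2 else 0).
  rewrite /coef mulr_suml big_mkcond; apply: eq_bigr => p _.
  by case: eqP => [->|]; rewrite ?mul0r.
rewrite (eq_bigr _ (fun b _ => coef_h b)) exchange_big /= [LHS]big_seq [RHS]big_seq.
apply: eq_bigr => p px.
by rewrite big_if_eq_uniq ?undup_uniq // mem_undup map_f.
Qed.
Definition scale_fsum (B : Type) (a : K) (x : fsum K B) : fsum K B :=
  [seq (a * p.1, p.2) | p <- x].

Lemma coef_scale_fsum (B : eqType) a (x : fsum K B) b :
  coef (scale_fsum a x) b = a * coef x b.
Proof. by rewrite /coef big_map mulr_sumr. Qed.

Lemma coef_lin_scale_fsum (B C : eqType) (f : B -> fsum K C) a x c :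
  coef (lin f (scale_fsum a x)) c = a * coef (lin f x) c.
Proof. by rewrite !coef_lin big_map mulr_sumr; apply: eq_bigr => p _; rewrite mulrA. Qed.
End FormalSums.

(** * Linear extensions and weak plane posets *)

Lemma linbP P g : reflect
  ((forall i j : 'I_(dsize P), le1 P i j -> nth 0 g i <= nth 0 g j) /\
   (forall i j : 'I_(dsize P), nth 0 g i = nth 0 g j -> qeq P i j)) (linb P g).
Proof.
apply: (iffP forallP) => [lin_g|[mono_g eq_qeq] i].
  split=> i j; have /forallP/(_ j)/andP[/implyP mono_ij /implyP eq_ij] := lin_g i => //.
  by move/eqP.
by apply/forallP => j; apply/andP; split; apply/implyP; [exact: mono_g | move/eqP; exact: eq_qeq].
Qed.

Lemma wlinbP P g : reflect
  ((forall i j : 'I_(dsize P), le1 P i j -> nth 0 g i <= nth 0 g j) /\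
   (forall i j : 'I_(dsize P), le1 P i j -> nth 0 g i = nth 0 g j -> qeq P i j)) (wlinb P g).
Proof.
apply: (iffP forallP) => [wlin_g|[mono_g eq_qeq] i].
  split=> i j; have /forallP/(_ j)/andP[/implyP mono_ij /implyP eq_ij] := wlin_g i => //.
  by move=> le_ij /eqP eq_g; apply: eq_ij; rewrite le_ij eq_g.
apply/forallP => j; apply/andP; split; apply/implyP; first exact: mono_g.
by case/andP => le_ij /eqP; exact: eq_qeq.
Qed.

Lemma precP n g f : size f = n -> reflect
  ((forall i j : 'I_n, nth 0 f i <= nth 0 f j -> nth 0 g i <= nth 0 g j) /\
   (forall i j : 'I_n, i < j -> nth 0 f j < nth 0 f i -> nth 0 g j < nth 0 g i))
  (precb g f).
Proof.
move=> <-; rewrite /precb all_iota0.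
under eq_forallb => i do rewrite all_iota0.
apply: (iffP forallP) => [prec_gf|[le_gf lt_gf] i].
  split=> i j; have /forallP/(_ j)/andP[/implyP le_ij /implyP lt_ij] := prec_gf i => //.
  by move=> lt_ij' lt_f; apply: lt_ij; rewrite lt_ij' lt_f.
apply/forallP => j; apply/andP; split; apply/implyP; first exact: le_gf.
by case/andP; exact: lt_gf.
Qed.

Lemma mem_Lin P f : (f \in Lin P) = [&& linb P f, packed f & size f == dsize P].
Proof. by rewrite mem_filter mem_pwords. Qed.

Lemma mem_WLin P f : (f \in WLin P) = [&& wlinb P f, packed f & size f == dsize P].
Proof. by rewrite mem_filter mem_pwords. Qed.

Lemma size_WLin P g : g \in WLin P -> size g = dsize P.
Proof. by rewrite mem_WLin => /and3P[_ _ /eqP]. Qed.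

Lemma WLin_dsize0 P : dsize P = 0 -> WLin P = [:: [::]].
Proof.
case: P => n [A B] /= n0; subst n; rewrite /WLin /pwords /=.
by have -> : wlinb (existT dpT 0 (A, B)) [::] by apply/forallP => -[].
Qed.

Lemma Lin_uniq P : uniq (Lin P).
Proof. by rewrite filter_uniq // pwords_uniq. Qed.

Lemma WLin_uniq P : uniq (WLin P).
Proof. by rewrite filter_uniq // pwords_uniq. Qed.

Lemma wlinb_pack Q x : size x = dsize Q -> wlinb Q (pack x) = wlinb Q x.
Proof.
move=> size_x; apply: eq_forallb => i; apply: eq_forallb => j.
by rewrite pack_leq ?pack_eq ?size_x.
Qed.

Section WeakPlanePoset.
Variable P : dposet.
Local Notation n := (dsize P).

Definition level (i : 'I_n) : nat := #|[set j | qle P j i]|.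

Definition canonical_word : seq nat := pack [seq level i | i <- enum 'I_n].

Lemma size_canonical_word : size canonical_word = n.
Proof. by rewrite size_pack size_map_enum. Qed.

Hypothesis wP : is_wpp P.

Lemma wpp_natural_order (i j : 'I_n) : (le1 P j i || le2 P i j) = (i <= j).
Proof. by case/and5P: wP => _ _ _ _ /andP[_ /forallP/(_ i)/forallP/(_ j)/eqP]. Qed.

Lemma le1_refl i : le1 P i i.
Proof. by case/and5P: wP => /and3P[/forallP le1_ii _ _] *; exact: le1_ii. Qed.

Lemma le2_refl i : le2 P i i.
Proof. by case/and5P: wP => _ /and3P[/forallP le2_ii _ _] *; exact: le2_ii. Qed.

Lemma qle_refl i : qle P i i.
Proof. by rewrite /qle le1_refl. Qed.

Lemma qle_total i j : qle P i j || qle P j i.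
Proof. by case/and5P: wP => _ _ _ /forallP/(_ i)/forallP/(_ j). Qed.

Lemma qle_of_negqle i j : ~~ qle P i j -> qle P j i.
Proof. by have := qle_total i j; case: (qle P i j). Qed.

Lemma qle_trans i j k : qle P i j -> qle P j k -> qle P i k.
Proof.
move=> le_ij le_jk; case/and5P: wP => _ _ _ _ /andP[/forallP/(_ i)/forallP/(_ j)/forallP/(_ k)].
by rewrite le_ij le_jk.
Qed.

Lemma le1E i j : le1 P i j = (j <= i) && qle P i j.
Proof.
apply/idP/andP => [le_ij|[le_ji /orP[//|le2_ij]]].
  by rewrite -wpp_natural_order /qle le_ij.
have le_ij : i <= j by rewrite -wpp_natural_order le2_ij orbT.
by have /eqP-> := ord_antisym le_ij le_ji; exact: le1_refl.
Qed.

Lemma le2E i j : le2 P i j = (i <= j) && qle P i j.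
Proof.
apply/idP/andP => [le_ij|[le_ij /orP[le1_ij|//]]].
  by rewrite -wpp_natural_order /qle le_ij !orbT.
have le_ji : j <= i by rewrite -wpp_natural_order le1_ij.
by have /eqP-> := ord_antisym le_ij le_ji; exact: le2_refl.
Qed.

Lemma level_leq i j : (level i <= level j) = qle P i j.
Proof.
apply/idP/idP => [|le_ij]; last first.
  by apply/subset_leq_card/subsetP => k; rewrite !inE => le_ki; exact: qle_trans le_ki le_ij.
apply: contraLR => nle_ij; have le_ji := qle_of_negqle nle_ij.
rewrite -ltnNge; apply: proper_card; rewrite properE; apply/andP; split.
  by apply/subsetP => k; rewrite !inE => le_kj; exact: qle_trans le_kj le_ji.
by apply/subsetPn; exists i; rewrite !inE ?qle_refl.
Qed.

Lemma canonical_word_leq (i j : 'I_n) :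
  (nth 0 canonical_word i <= nth 0 canonical_word j) = qle P i j.
Proof. by rewrite pack_leq ?size_map_enum // !nth_map_enum level_leq. Qed.

Lemma canonical_word_WLin : canonical_word \in WLin P.
Proof.
rewrite mem_WLin packed_pack size_canonical_word eqxx /= andbT.
apply/wlinbP; split=> i j le_ij; first by rewrite canonical_word_leq /qle le_ij.
by move/eqP; rewrite eqn_leq !canonical_word_leq.
Qed.

End WeakPlanePoset.

Lemma canonical_word_inj P Q : is_wpp P -> is_wpp Q ->
  canonical_word P = canonical_word Q -> P = Q.
Proof.
case: P => n [A1 A2] wP; case: Q => m [B1 B2] wQ eq_PQ.
have eq_nm : n = m.
  by have := size_canonical_word (existT dpT m (B1, B2)); rewrite -eq_PQ size_canonical_word.
subst m; set P := existT _ n (A1, A2) in wP eq_PQ *; set Q := existT _ n (B1, B2) in wQ eq_PQ *.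
have eq_qle (i j : 'I_n) : qle P i j = qle Q i j.
  by rewrite -(canonical_word_leq wP) -(canonical_word_leq wQ) eq_PQ.
congr existT; congr pair; apply/setP => -[i j].
  by have := le1E wP i j; have := le1E wQ i j; rewrite eq_qle /le1 /= => -> ->.
by have := le2E wP i j; have := le2E wQ i j; rewrite eq_qle /le2 /= => -> ->.
Qed.

Definition word_wpp (w : seq nat) : dposet :=
  existT dpT (size w)
   ([set ij : 'I_(size w) * 'I_(size w) | (ij.2 <= ij.1) && (nth 0 w ij.1 <= nth 0 w ij.2)],
    [set ij : 'I_(size w) * 'I_(size w) | (ij.1 <= ij.2) && (nth 0 w ij.1 <= nth 0 w ij.2)]).

Section WordWpp.
Variable w : seq nat.
Implicit Types i j k : 'I_(size w).

Lemma le1_word_wpp i j : le1 (word_wpp w) i j = (j <= i) && (nth 0 w i <= nth 0 w j).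
Proof. by rewrite /le1 inE. Qed.

Lemma le2_word_wpp i j : le2 (word_wpp w) i j = (i <= j) && (nth 0 w i <= nth 0 w j).
Proof. by rewrite /le2 inE. Qed.

Lemma qle_word_wpp i j : qle (word_wpp w) i j = (nth 0 w i <= nth 0 w j).
Proof. by rewrite /qle le1_word_wpp le2_word_wpp -andb_orl orbC leq_total. Qed.

Lemma word_wpp_is_wpp : is_wpp (word_wpp w).
Proof.
apply/and5P; split.
- apply/and3P; split; do ![apply/forallP => ?]; rewrite ?le1_word_wpp ?leqnn //.
    by apply/implyP => /andP[/andP[le_ji _] /andP[le_ij _]]; rewrite ord_antisym.
  by apply/implyP => /andP[/andP[? ?] /andP[? ?]]; apply/andP; split; lia.
- apply/and3P; split; do ![apply/forallP => ?]; rewrite ?le2_word_wpp ?leqnn //.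
    by apply/implyP => /andP[/andP[le_ij _] /andP[le_ji _]]; rewrite ord_antisym.
  by apply/implyP => /andP[/andP[? ?] /andP[? ?]]; apply/andP; split; lia.
- do ![apply/forallP => ?]; rewrite le1_word_wpp le2_word_wpp.
  by apply/implyP => /andP[/andP[le_ji _] /andP[le_ij _]]; rewrite ord_antisym.
- by do ![apply/forallP => ?]; rewrite !qle_word_wpp leq_total.
apply/andP; split; do ![apply/forallP => ?]; rewrite ?qle_word_wpp.
  by apply/implyP => /andP[le_ij le_jk]; rewrite (leq_trans le_ij le_jk).
by rewrite le1_word_wpp le2_word_wpp -andb_orr orbC leq_total andbT.
Qed.

Lemma canonical_word_word_wpp : packed w -> canonical_word (word_wpp w) = w.
Proof.
move=> /eqP w_packed; rewrite -[RHS]w_packed; apply: eq_pack; first by rewrite size_map_enum.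
rewrite size_map_enum => i j lt_i lt_j.
have := level_leq word_wpp_is_wpp (Ordinal lt_i) (Ordinal lt_j).
by rewrite qle_word_wpp (nth_map_enum _ (Ordinal lt_i)) (nth_map_enum _ (Ordinal lt_j)).
Qed.

End WordWpp.

(** * The factorisation [phi' = psi \o phi] *)

Section PsiPhi.
Variable P : dposet.
Hypothesis wP : is_wpp P.
Local Notation n := (dsize P).

Lemma WLin_of_prec_Lin g f : size f = n -> linb P f -> precb g f -> wlinb P g.
Proof.
move=> size_f /linbP[mono_f eq_f] /(precP _ size_f)[le_gf lt_gf].
apply/wlinbP; split=> i j le1_ij; first exact/le_gf/mono_f.
move=> eq_g; case: (eqVneq (nth 0 f i) (nth 0 f j)) => [/eq_f //|neq_f].
have lt_f : nth 0 f i < nth 0 f j by rewrite ltn_neqAle neq_f mono_f.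
move: le1_ij; rewrite le1E // => /andP[le_ji _].
case: (ltngtP j i) le_ji => // [lt_ji _|/val_inj -> _]; last by rewrite /qeq qle_refl.
by have := lt_gf j i lt_ji lt_f; rewrite eq_g ltnn.
Qed.

Lemma Lin_prec_leq g f : size f = n -> linb P f -> precb g f -> forall i j : 'I_n,
  (nth 0 f i <= nth 0 f j) =
  (nth 0 g i < nth 0 g j) || (nth 0 g i == nth 0 g j) && qle P i j.
Proof.
move=> size_f /linbP[mono_f eq_f] /(precP _ size_f)[le_gf lt_gf] i j.
case: (ltngtP (nth 0 g i) (nth 0 g j)) => [lt_g|lt_g|eq_g] /=.
- by rewrite leqNgt; apply: contraL lt_g => /ltnW/le_gf; rewrite -leqNgt.
- by apply/negbTE; apply: contraL lt_g => /le_gf; rewrite -leqNgt.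
apply/idP/idP => [le_f|le_ij].
  apply: contraT => nle_ij; have le_ji := qle_of_negqle wP nle_ij.
  have lt_f : nth 0 f i < nth 0 f j.
    by rewrite ltn_neqAle le_f andbT; apply: contra nle_ij => /eqP/eq_f/andP[].
  case: (ltngtP i j) => [lt_ij|lt_ji|/val_inj eq_ij]; last by rewrite eq_ij qle_refl in nle_ij.
    by have := mono_f j i; rewrite le1E // (ltnW lt_ij) le_ji leqNgt lt_f => /(_ isT).
  by have := lt_gf j i lt_ji lt_f; rewrite eq_g ltnn.
case: (leqP j i) => [le_ji|lt_ij]; first by apply: mono_f; rewrite le1E // le_ji.
by rewrite leqNgt; apply/negP => /(lt_gf i j lt_ij); rewrite eq_g ltnn.
Qed.

(* The pair [(g_i, level i)] in lexicographic order, encoded in [nat]: levels are at most [n]. *)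
Definition refine_key g (i : 'I_n) := nth 0 g i * n.+1 + level i.

Definition refine g := pack [seq refine_key g i | i <- enum 'I_n].

Lemma level_le_size (i : 'I_n) : level i <= n.
Proof. by rewrite /level (leq_trans (max_card _)) ?card_ord. Qed.

Lemma refine_leq g (i j : 'I_n) : (nth 0 (refine g) i <= nth 0 (refine g) j) =
  (nth 0 g i < nth 0 g j) || (nth 0 g i == nth 0 g j) && qle P i j.
Proof.
by rewrite pack_leq ?size_map_enum // !nth_map_enum lex_leq ?level_le_size // level_leq.
Qed.

Lemma refine_Lin g : wlinb P g -> refine g \in Lin P.
Proof.
move=> /wlinbP[mono_g eq_g].
rewrite mem_Lin packed_pack size_pack size_map_enum eqxx /= andbT.
apply/linbP; split=> i j.
  by move=> le1_ij; rewrite refine_leq /qle le1_ij andbT orbC -leq_eqVlt mono_g.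
move/eqP; rewrite eqn_leq !refine_leq /qeq.
by case: (ltngtP (nth 0 g i) (nth 0 g j)).
Qed.

Lemma prec_refine g : wlinb P g -> precb g (refine g).
Proof.
move=> /wlinbP[mono_g eq_g].
apply/(precP _ (etrans (size_pack _) (size_map_enum _))); split=> i j.
  by rewrite refine_leq => /orP[/ltnW //|/andP[/eqP-> _]].
move=> lt_ij; rewrite ltnNge refine_leq negb_or negb_and.
case: (ltngtP (nth 0 g j) (nth 0 g i)) => //= eq_g_ji nle_ij.
have := eq_g j i; rewrite le1E // (ltnW lt_ij) qle_of_negqle // => /(_ isT eq_g_ji).
by rewrite /qeq (negbTE nle_ij) andbF.
Qed.

Lemma count_prec_Lin g : count (precb g) (Lin P) = wlinb P g.
Proof.
case wlin_g: (wlinb P g); last first.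
  apply/eqP; rewrite eqn0Ngt -has_count; apply/hasPn => f.
  rewrite mem_Lin => /and3P[lin_f _ /eqP size_f]; apply: contraFN wlin_g.
  exact: WLin_of_prec_Lin.
rewrite (@eq_in_count _ _ (pred1 (refine g))) ?count_uniq_mem ?Lin_uniq ?refine_Lin //.
move=> f; rewrite mem_Lin => /and3P[lin_f /eqP f_packed /eqP size_f] /=.
apply/idP/eqP => [prec_gf|->]; last exact: prec_refine.
rewrite -f_packed; apply: eq_pack; first by rewrite size_f size_map_enum.
move=> a b; rewrite size_f => lt_a lt_b.
rewrite (nth_map_enum _ (Ordinal lt_a)) (nth_map_enum _ (Ordinal lt_b)).
rewrite lex_leq ?level_le_size // level_leq //.
exact: (Lin_prec_leq size_f lin_f prec_gf (Ordinal lt_a) (Ordinal lt_b)).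
Qed.

End PsiPhi.

(** * Product *)

Section Product.
Variables P Q : dposet.
Local Notation p := (dsize P).
Local Notation q := (dsize Q).

Lemma le1_mul (a b : 'I_p + 'I_q) :
  le1 (dp_mul P Q) (unsplit a) (unsplit b) =
  match a, b with inl x, inl y => le1 P x y | inr x, inr y => le1 Q x y | _, _ => false end.
Proof. by rewrite /le1 /= inE /= !unsplitK. Qed.

Lemma le2_mul (a b : 'I_p + 'I_q) :
  le2 (dp_mul P Q) (unsplit a) (unsplit b) =
  match a, b with inl x, inl y => le2 P x y | inr x, inr y => le2 Q x y
   | inl _, inr _ => true | _, _ => false end.
Proof. by rewrite /le2 /= inE /= !unsplitK. Qed.

Lemma qeq_mul_lshift (x y : 'I_p) : qeq (dp_mul P Q) (lshift q x) (lshift q y) = qeq P x y.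
Proof. by rewrite /qeq /qle -!/(unsplit (inl _)) !le1_mul !le2_mul. Qed.

Lemma qeq_mul_rshift (x y : 'I_q) : qeq (dp_mul P Q) (rshift p x) (rshift p y) = qeq Q x y.
Proof. by rewrite /qeq /qle -!/(unsplit (inr _)) !le1_mul !le2_mul. Qed.

Lemma wlinb_mul w :
  wlinb (dp_mul P Q) w = wlinb P (take p w) && wlinb Q (drop p w).
Proof.
apply/forallP/andP => [wlin_w|[/forallP wlin_l /forallP wlin_r] i].
  split; apply/forallP => x; apply/forallP => y.
    have /forallP/(_ (unsplit (inl y))) := wlin_w (unsplit (inl x)).
    by rewrite le1_mul qeq_mul_lshift /= !nth_take.
  have /forallP/(_ (unsplit (inr y))) := wlin_w (unsplit (inr x)).
  by rewrite le1_mul qeq_mul_rshift /= !nth_drop.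
apply/forallP => j; rewrite -(splitK i) -(splitK j).
case: (split i) => x; case: (split j) => y; rewrite le1_mul //=.
  by have /forallP/(_ y) := wlin_l x; rewrite qeq_mul_lshift /= !nth_take.
by have /forallP/(_ y) := wlin_r x; rewrite qeq_mul_rshift /= !nth_drop.
Qed.

Lemma mem_WLin_mul w : (w \in WLin (dp_mul P Q)) =
  [&& w \in pwords (p + q), pack (take p w) \in WLin P & pack (drop p w) \in WLin Q].
Proof.
rewrite mem_pwords !mem_WLin wlinb_mul !packed_pack !size_pack.
case: (packed w); case: eqP => [/= size_w|_]; rewrite /= ?andbF //.
have size_l : size (take p w) = p by rewrite size_takel // size_w leq_addr.
have size_r : size (drop p w) = q by rewrite size_drop size_w addKn.
by rewrite !wlinb_pack // size_l size_r !eqxx !andbT.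
Qed.

End Product.

Lemma count_wmul_list (A B : seq (seq nat)) p q w :
  uniq A -> uniq B -> {in A, forall a, size a = p} -> {in B, forall b, size b = q} ->
  count_mem w (flatten [seq wmul_list ab.1 ab.2 | ab <- [seq (a, b) | a <- A, b <- B]]) =
  [&& w \in pwords (p + q), pack (take p w) \in A & pack (drop p w) \in B].
Proof.
move=> A_uniq B_uniq size_A size_B.
set cut := (pack (take p w), pack (drop p w)).
rewrite (count_flatten_map (p := fun ab => (w \in pwords (p + q)) && (ab == cut))); last first.
  move=> [a b] /allpairsP[[a' b'] /= [a_A b_B [-> ->]]].
  rewrite count_uniq_mem ?(filter_uniq _ (pwords_uniq _)) // mem_filter size_A ?size_B //.
  by rewrite andbC /cut xpair_eqE !(eq_sym a') !(eq_sym b').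
by case: (w \in pwords (p + q)); rewrite ?count_pred0 // count_allpairs_pair.
Qed.

(** * Coproduct *)

Definition restr_word n (A : {set 'I_n}) (w : seq nat) : seq nat :=
  [seq nth 0 w i | i : 'I_n <- enum A].

Section RestrWord.
Variables (n : nat) (w : seq nat).
Implicit Types A : {set 'I_n}.

Lemma size_restr_word A : size (restr_word A w) = #|A|.
Proof. by rewrite size_map cardE. Qed.

Lemma nth_restr_word A (a : 'I_#|A|) : nth 0 (restr_word A w) a = nth 0 w (enum_val a).
Proof. by rewrite /restr_word (nth_map (enum_val a)) -?cardE // -enum_val_nth. Qed.

Lemma index_enum_ltn A i : i \in A -> index i (enum A) < #|A|.
Proof. by move=> iA; rewrite cardE index_mem mem_enum. Qed.

Lemma nth_restr_word_index A i : i \in A ->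
  nth 0 (restr_word A w) (index i (enum A)) = nth 0 w i.
Proof. by move=> iA; rewrite (nth_map i) ?index_mem ?mem_enum // nth_index ?mem_enum. Qed.

Hypothesis size_w : size w = n.

Lemma filter_restr_word (p : pred nat) :
  filter p w = restr_word [set i : 'I_n | p (nth 0 w i)] w.
Proof.
have {1}-> : w = [seq nth 0 w i | i : 'I_n <- enum 'I_n].
  by rewrite (map_comp (nth 0 w) val) val_enum_ord -size_w map_nth_iota0 // take_size.
rewrite filter_map /restr_word; congr map; rewrite {2}/enum_mem -enumT.
by apply: eq_filter => i /=; rewrite inE.
Qed.

Lemma mem_restr_word_setC A x :
  (x \in w) = (x \in restr_word A w) || (x \in restr_word (~: A) w).
Proof.
apply/idP/orP => [/(nthP 0)[m lt_m <-]|[] /mapP[i _ ->]]; last 2 first.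
- by rewrite mem_nth ?size_w.
- by rewrite mem_nth ?size_w.
have lt_mn : m < n by rewrite -size_w.
by case: (boolP (Ordinal lt_mn \in A)) => iA; [left|right]; apply/mapP;
  exists (Ordinal lt_mn); rewrite ?mem_enum ?inE.
Qed.

End RestrWord.

Lemma le1_restr P (A : {set 'I_(dsize P)}) (a b : 'I_#|A|) :
  le1 (dp_restr A) a b = le1 P (enum_val a) (enum_val b).
Proof. by rewrite /le1 inE. Qed.

Lemma qeq_restr P (A : {set 'I_(dsize P)}) (a b : 'I_#|A|) :
  qeq (dp_restr A) a b = qeq P (enum_val a) (enum_val b).
Proof. by rewrite /qeq /qle !le1_restr /le2 !inE. Qed.

Lemma wlinb_restr P (A : {set 'I_(dsize P)}) w :
  wlinb (dp_restr A) (restr_word A w) =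
  [forall i in A, forall j in A,
     (le1 P i j ==> (nth 0 w i <= nth 0 w j)) &&
     (le1 P i j && (nth 0 w i == nth 0 w j) ==> qeq P i j)].
Proof.
apply/forallP/forall_inP => [wlin_A i iA|wlin_A a]; last first.
  apply/forallP => b; have /forall_inP := wlin_A _ (enum_valP a).
  by move=> /(_ _ (enum_valP b)); rewrite !le1_restr !nth_restr_word qeq_restr.
apply/forall_inP => j jA; have /forallP := wlin_A (enum_rank_in iA i).
by move=> /(_ (enum_rank_in iA j)); rewrite !le1_restr !nth_restr_word qeq_restr !enum_rankK_in.
Qed.

Lemma wlinb_restr_word P (A : {set 'I_(dsize P)}) w :
  wlinb P w -> wlinb (dp_restr A) (restr_word A w).
Proof.
by move=> /forallP wlin_w; rewrite wlinb_restr; apply/forall_inP => i _; apply/forall_inP => j _;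
  exact: (forallP (wlin_w i)).
Qed.

Section Coproduct.
Variables (P : dposet) (u v : seq nat).
Local Notation n := (dsize P).
Local Notation k := (\max_(x <- u) x).

(* [(u, v)] is the term of [wdelta w] obtained by cutting the alphabet of [w] at [k]. *)
Definition is_split (w : seq nat) : bool :=
  [&& k <= \max_(x <- w) x, [seq x <- w | x <= k] == u & pack [seq x <- w | k < x] == v].

Definition restr_pair_WLin (O : {set 'I_n}) : bool :=
  (u \in WLin (dp_restr (~: O))) && (v \in WLin (dp_restr O)).

Definition upper_set (w : seq nat) : {set 'I_n} := [set i : 'I_n | k < nth 0 w i].

Definition glue (O : {set 'I_n}) : seq nat :=
  [seq if i \in O then nth 0 v (index i (enum O)) + k else nth 0 u (index i (enum (~: O)))
  | i <- enum 'I_n].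

Lemma setC_upper_set w : ~: upper_set w = [set i : 'I_n | nth 0 w i <= k].
Proof. by apply/setP => i; rewrite !inE -leqNgt. Qed.

Lemma filter_leq_restr_word w : size w = n ->
  [seq x <- w | x <= k] = restr_word (~: upper_set w) w.
Proof. by move=> size_w; rewrite setC_upper_set (filter_restr_word size_w). Qed.

Lemma filter_gtn_restr_word w : size w = n ->
  [seq x <- w | k < x] = restr_word (upper_set w) w.
Proof. by move=> size_w; rewrite (filter_restr_word size_w). Qed.

Lemma upper_set_upclosed w : wlinb P w -> upclosed1 (upper_set w).
Proof.
move=> /wlinbP[mono_w _]; apply/forallP => i; apply/forallP => j.
by apply/implyP => /andP[]; rewrite !inE => lt_ki /mono_w; exact: leq_trans.
Qed.

Lemma restr_pair_WLin_upper_set w : w \in WLin P -> is_split w ->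
  restr_pair_WLin (upper_set w).
Proof.
rewrite mem_WLin => /and3P[wlin_w w_packed /eqP size_w] /and3P[le_k /eqP def_u /eqP def_v].
rewrite /restr_pair_WLin !mem_WLin -def_u -def_v packed_filter_leq // packed_pack size_pack.
rewrite filter_leq_restr_word ?filter_gtn_restr_word ?wlinb_pack ?size_restr_word //.
by rewrite !wlinb_restr_word // !eqxx.
Qed.

Section Glue.
Variable O : {set 'I_n}.
Hypothesis O_ok : restr_pair_WLin O.

Let u_WLin : [&& wlinb (dp_restr (~: O)) u, packed u & size u == #|~: O|].
Proof. by rewrite -mem_WLin; case/andP: O_ok. Qed.

Let v_WLin : [&& wlinb (dp_restr O) v, packed v & size v == #|O|].
Proof. by rewrite -mem_WLin; case/andP: O_ok. Qed.

Let size_u : size u = #|~: O|. Proof. by case/and3P: u_WLin => _ _ /eqP. Qed.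
Let size_v : size v = #|O|. Proof. by case/and3P: v_WLin => _ _ /eqP. Qed.

Let mem_u x : (x \in u) = (0 < x <= k).
Proof. by case/and3P: u_WLin => _ u_packed _; rewrite packed_mem. Qed.

Let mem_v x : (x \in v) = (0 < x <= \max_(y <- v) y).
Proof. by case/and3P: v_WLin => _ v_packed _; rewrite packed_mem. Qed.

Lemma nth_glue (i : 'I_n) : nth 0 (glue O) i =
  if i \in O then nth 0 v (index i (enum O)) + k else nth 0 u (index i (enum (~: O))).
Proof. exact: nth_map_enum. Qed.

Lemma restr_word_glue_setC : restr_word (~: O) (glue O) = u.
Proof.
rewrite -[RHS](map_nth_index (enum_uniq (~: O))) -?cardE //.
by apply/eq_in_map => i; rewrite mem_enum inE => /negbTE iO; rewrite nth_glue iO.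
Qed.

Lemma restr_word_glue : restr_word O (glue O) = [seq x + k | x <- v].
Proof.
have size_enum : size (enum O) = size v by rewrite -cardE size_v.
rewrite -[v in RHS](map_nth_index (enum_uniq O) size_enum) -map_comp.
by apply/eq_in_map => i; rewrite mem_enum => iO; rewrite /= nth_glue iO.
Qed.

Lemma upper_set_glue : upper_set (glue O) = O.
Proof.
apply/setP => i; rewrite inE nth_glue; case: ifP => iO.
  have : nth 0 v (index i (enum O)) \in v by rewrite mem_nth // size_v index_enum_ltn.
  by rewrite mem_v => /andP[lt0 _]; rewrite -{1}(add0n k) ltn_add2r lt0.
have : nth 0 u (index i (enum (~: O))) \in u by rewrite mem_nth // size_u index_enum_ltn // inE iO.
by rewrite mem_u => /andP[_ le_k]; rewrite ltnNge le_k.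
Qed.

Lemma mem_glue x : (x \in glue O) = (0 < x <= k + \max_(y <- v) y).
Proof.
rewrite (mem_restr_word_setC (size_map_enum _) O) restr_word_glue restr_word_glue_setC mem_u.
apply/orP/idP => [[/mapP[y]|] |]; rewrite ?mem_v; first by move=> /andP[? ?] ->; lia.
  by move=> /andP[? ?]; lia.
case/andP => x_gt0 le_x; case: (leqP x k) => [le_xk|lt_kx]; [right|left]; first by rewrite x_gt0.
by apply/mapP; exists (x - k); rewrite ?subnK 1?ltnW // mem_v; apply/andP; split; lia.
Qed.

Lemma is_split_glue : is_split (glue O).
Proof.
apply/and3P; split.
- have [->//|k_gt0] := posnP k.
  have k_glue : k \in glue O by rewrite mem_glue k_gt0 leq_addr.
  exact: (@leq_bigmax_seq _ _ xpredT id _ k_glue).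
- by rewrite filter_leq_restr_word ?size_map_enum // upper_set_glue restr_word_glue_setC.
rewrite filter_gtn_restr_word ?size_map_enum // upper_set_glue restr_word_glue pack_addn.
by case/and3P: v_WLin.
Qed.

Lemma glue_WLin : upclosed1 O -> glue O \in WLin P.
Proof.
move=> /forallP O_up; rewrite mem_WLin size_map_enum eqxx andbT.
rewrite (packed_of_mem mem_glue) andbT; apply/forallP => i; apply/forallP => j.
have in_O l : (l \in O) = (k < nth 0 (glue O) l) by rewrite -{1}upper_set_glue inE.
case: (boolP (i \in O)) => iO; case: (boolP (j \in O)) => jO.
- have : wlinb (dp_restr O) (restr_word O (glue O)).
    rewrite -wlinb_pack ?size_restr_word // restr_word_glue pack_addn.
    by case/and3P: v_WLin => ? /eqP->.
  by rewrite wlinb_restr => /forall_inP/(_ i iO)/forall_inP/(_ j jO).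
- by have /forallP/(_ j) := O_up i; rewrite iO (negbTE jO) /= implybF => /negbTE->.
- move: iO jO; rewrite !in_O -leqNgt => le_ik lt_kj.
  rewrite (leq_trans le_ik (ltnW lt_kj)) implybT /=.
  by rewrite (ltn_eqF (leq_ltn_trans le_ik lt_kj)) andbF.
have : wlinb (dp_restr (~: O)) (restr_word (~: O) (glue O)).
  by rewrite restr_word_glue_setC; case/and3P: u_WLin.
rewrite wlinb_restr => /forall_inP/(_ i _)/forall_inP/(_ j _).
by rewrite !inE iO jO; apply.
Qed.

End Glue.

Lemma glue_upper_set w : w \in WLin P -> is_split w -> glue (upper_set w) = w.
Proof.
rewrite mem_WLin => /and3P[_ w_packed /eqP size_w] /and3P[_ /eqP def_u /eqP def_v].
have restr_in : restr_word (upper_set w) w = [seq x + k | x <- v].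
  by rewrite -filter_gtn_restr_word // -def_v -(filter_gtn_packed k w_packed).
have restr_out : restr_word (~: upper_set w) w = u by rewrite -filter_leq_restr_word.
apply: (@eq_from_nth _ 0); rewrite size_map_enum ?size_w // => m lt_m.
rewrite -[m]/(nat_of_ord (Ordinal lt_m)) nth_glue; set i := Ordinal lt_m.
case: ifP => i_up.
  rewrite -(nth_restr_word_index w i_up) restr_in (nth_map 0) //.
  by rewrite -(size_map (addn^~ k)) -restr_in size_restr_word index_enum_ltn.
by rewrite -restr_out nth_restr_word_index // inE i_up.
Qed.

Lemma count_restr_pair_WLin :
  count restr_pair_WLin [seq O <- enum [set: {set 'I_n}] | upclosed1 O] =
  count is_split (WLin P).
Proof.
rewrite -!size_filter -(size_map glue); apply/perm_size/uniq_perm.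
- rewrite map_inj_in_uniq ?filter_uniq ?enum_uniq ?index_enum_uniq // => O1 O2.
  rewrite !mem_filter => /andP[ok1 _] /andP[ok2 _] eq_glue.
  by rewrite -(upper_set_glue ok1) eq_glue upper_set_glue.
- exact: filter_uniq (WLin_uniq P).
move=> w; rewrite mem_filter; apply/mapP/andP => [[O]|[split_w w_WLin]].
  rewrite mem_filter => /andP[O_ok]; rewrite mem_filter => /andP[up_O _] ->.
  by split; [exact: is_split_glue O_ok | exact: glue_WLin O_ok up_O].
exists (upper_set w); last by rewrite glue_upper_set.
rewrite mem_filter restr_pair_WLin_upper_set // mem_filter mem_enum in_setT andbT.
by apply: upper_set_upclosed; move: w_WLin; rewrite mem_WLin => /andP[].
Qed.

End Coproduct.

Lemma count_wdelta_terms w u v : packed w ->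
  count_mem (u, v) [seq ([seq x <- w | x <= j], pack [seq x <- w | j < x])
                   | j <- iota 0 (\max_(x <- w) x).+1] = is_split u v w.
Proof.
move=> w_packed; rewrite count_map /is_split.
set k := \max_(x <- u) x.
set cut_k := ([seq x <- w | x <= k] == u) && (pack [seq x <- w | k < x] == v).
rewrite (@eq_in_count _ _ (fun j => (j == k) && cut_k)); last first.
  move=> j; rewrite mem_iota add0n ltnS => /andP[_ le_j] /=; rewrite xpair_eqE.
  apply/andP/andP => [[/eqP def_u def_v]|[/eqP-> /andP[-> ->]]] //.
  have def_k : k = j by rewrite /k -def_u max_filter_leq.
  by rewrite -def_k eqxx /cut_k def_k def_u eqxx def_v.
case: cut_k; rewrite ?andbF ?andbT; last first.
  by rewrite (@eq_count _ _ pred0) ?count_pred0 // => j; rewrite andbF.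
rewrite (@eq_count _ _ (pred1 k)) => [|j]; last by rewrite andbT.
by rewrite count_uniq_mem ?iota_uniq // mem_iota add0n ltnS.
Qed.

(** * Triangularity *)

Definition strict_rel (T : Type) (r : rel T) : rel T := fun i j => r i j && ~~ r j i.

Definition inversions n (r : rel 'I_n) : {set 'I_n * 'I_n} :=
  [set ij : 'I_n * 'I_n | (ij.2 < ij.1) && r ij.1 ij.2].

(* For [j < i], the pair counts [0], [1] or [2] times according as [i] is strictly
   above, equivalent to, or strictly below [j] for [r]. *)
Definition inversion_weight n (r : rel 'I_n) : nat :=
  #|inversions r| + #|inversions (strict_rel r)|.

Definition word_rel n (g : seq nat) : rel 'I_n := fun i j => nth 0 g i <= nth 0 g j.

Section InversionWeight.
Variables (n : nat) (r r' : rel 'I_n).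

Lemma eq_inversion_weight : r =2 r' -> inversion_weight r = inversion_weight r'.
Proof.
move=> eq_r; rewrite /inversion_weight /inversions /strict_rel.
by congr (_ + _); apply: eq_card => ij; rewrite !inE !eq_r.
Qed.

Lemma inversion_weight_bound : inversion_weight r <= n * n + n * n.
Proof. by apply: leq_add; apply: leq_trans (max_card _) _; rewrite card_prod card_ord. Qed.

Hypotheses (sub_r : inversions r \subset inversions r')
           (sub_strict : inversions (strict_rel r) \subset inversions (strict_rel r')).

Lemma inversion_weight_leq : inversion_weight r <= inversion_weight r'.
Proof. by rewrite leq_add ?subset_leq_card. Qed.

Lemma inversion_weight_inj : total r -> total r' ->
  inversion_weight r = inversion_weight r' -> r =2 r'.
Proof.
move=> tot_r tot_r' eq_w.
have le1 := subset_leq_card sub_r; have le2 := subset_leq_card sub_strict.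
move: eq_w; rewrite /inversion_weight => eq_w.
have /eqP/setP eq1 : inversions r == inversions r'.
  by rewrite eqEcard sub_r /= -(leq_add2r #|inversions (strict_rel r)|) eq_w leq_add2l.
have /eqP/setP eq2 : inversions (strict_rel r) == inversions (strict_rel r').
  by rewrite eqEcard sub_strict /= -(leq_add2l #|inversions r|) eq_w leq_add2r.
move=> i j; case: (ltngtP i j) => [lt_ij|lt_ji|/val_inj->]; last first.
- by have := tot_r j j; have := tot_r' j j; rewrite !orbb => -> ->.
- by have := eq1 (i, j); rewrite !inE /= lt_ji.
have := eq1 (j, i); have := eq2 (j, i); rewrite !inE /= lt_ij /strict_rel /=.
move: (tot_r i j) (tot_r' i j).
by case: (r i j); case: (r' i j); case: (r j i); case: (r' j i).
Qed.

End InversionWeight.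

Definition word_weight (g : seq nat) : nat := inversion_weight (@word_rel (size g) g).

Lemma word_weight_canonical_word P : is_wpp P ->
  word_weight (canonical_word P) = inversion_weight (qle P).
Proof.
move=> wP; rewrite /word_weight size_canonical_word.
by apply: eq_inversion_weight => i j; rewrite /word_rel canonical_word_leq.
Qed.

Lemma WLin_inversions Q g : is_wpp Q -> wlinb Q g ->
  inversions (qle Q) \subset inversions (word_rel g) /\
  inversions (strict_rel (qle Q)) \subset inversions (strict_rel (word_rel g)).
Proof.
move=> wQ /wlinbP[mono_g eq_g]; split; apply/subsetP => -[a b]; rewrite !inE /=.
  by case/andP => lt_ba le_ab; rewrite lt_ba /word_rel mono_g // le1E // ltnW.
rewrite /strict_rel /word_rel.
case/and3P => lt_ba le_ab nle_ba; have le1_ab : le1 Q a b by rewrite le1E // ltnW.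
rewrite lt_ba -ltnNge ltn_neqAle mono_g // andbT.
by apply: contra nle_ba => /eqP/(eq_g _ _ le1_ab)/andP[].
Qed.

Lemma WLin_inversion_weight_gt P g : is_wpp P -> g \in WLin P ->
  g != canonical_word P -> inversion_weight (qle P) < word_weight g.
Proof.
move=> wP; rewrite mem_WLin => /and3P[wlin_g /eqP g_packed /eqP size_g].
rewrite /word_weight size_g; have [sub1 sub2] := WLin_inversions wP wlin_g.
rewrite ltn_neqAle inversion_weight_leq // andbT; apply: contra => /eqP eq_w.
have eq_rel := inversion_weight_inj sub1 sub2 (qle_total wP) (fun i j => leq_total _ _) eq_w.
apply/eqP; rewrite -g_packed; apply: eq_pack; first by rewrite size_g size_map_enum.
move=> a b; rewrite size_g => lt_a lt_b.
by rewrite (nth_map_enum _ (Ordinal lt_a)) (nth_map_enum _ (Ordinal lt_b)) level_leq // eq_rel.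
Qed.

Lemma canonical_word_WLin_lt P Q : is_wpp P -> is_wpp Q ->
  canonical_word P \in WLin Q -> P != Q -> inversion_weight (qle Q) < inversion_weight (qle P).
Proof.
move=> wP wQ cP_WLin neq_PQ; rewrite -(word_weight_canonical_word wP).
apply: WLin_inversion_weight_gt => //; apply: contra neq_PQ => /eqP eq_c.
by apply/eqP/canonical_word_inj.
Qed.

Lemma WLin_word_wpp_gt w g : packed w -> g \in WLin (word_wpp w) -> g != w ->
  word_weight w < word_weight g.
Proof.
move=> w_packed g_WLin neq_gw.
rewrite -{1}(canonical_word_word_wpp w_packed) word_weight_canonical_word ?word_wpp_is_wpp //.
by apply: WLin_inversion_weight_gt; rewrite ?word_wpp_is_wpp ?canonical_word_word_wpp.
Qed.

(** * [phi'] is a Hopf algebra isomorphism *)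

Section HopfMorphism.
Variable K : nzRingType.
Local Open Scope ring_scope.

Lemma phi'_unit w : coef (phi' (K := K) dp_empty) w = coef [:: (1, [::])] w.
Proof. by rewrite /phi' WLin_dsize0. Qed.

Lemma phi'_counit P : coef (phi' (K := K) P) [::] = (dsize P == 0%N)%:R.
Proof.
rewrite /phi' coef_ones; have [/WLin_dsize0-> //|n_gt0] := posnP (dsize P).
rewrite count_uniq_mem ?WLin_uniq //.
suff -> : ([::] \in WLin P) = false by [].
by apply: contraTF n_gt0 => /size_WLin <-.
Qed.

Lemma phi'_mul P Q w :
  coef (phi' (K := K) (dp_mul P Q)) w = coef (wmul (phi' P) (phi' Q)) w.
Proof.
rewrite /wmul /phi' tens_ones lin_ones !coef_ones count_uniq_mem ?WLin_uniq //.
by rewrite mem_WLin_mul (count_wmul_list (p := dsize P) (q := dsize Q)) ?WLin_uniq //;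
  move=> ?; exact: size_WLin.
Qed.

Lemma phi'_comul P uv :
  coef (lin2 phi' phi' (dp_delta (K := K) P)) uv = coef (lin wdelta (phi' (K := K) P)) uv.
Proof.
case: uv => u v; rewrite /lin2 /phi' /dp_delta /wdelta.
under eq_lin => bc do rewrite tens_ones.
rewrite !lin_ones !coef_ones -map_comp; congr _%:R.
rewrite (count_flatten_map (p := @restr_pair_WLin P u v)); last first.
  by move=> O _ /=; rewrite count_allpairs_pair ?WLin_uniq.
rewrite (count_flatten_map (p := is_split u v)) ?count_restr_pair_WLin //.
by move=> w /[!mem_WLin] /and3P[_ w_packed _]; rewrite count_wdelta_terms.
Qed.

Lemma phi'_psi_phi P : is_wpp P -> forall w,
  coef (phi' (K := K) P) w = coef (lin psi (phi (K := K) P)) w.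
Proof.
move=> wP w; rewrite /phi' /phi /psi lin_ones !coef_ones count_uniq_mem ?WLin_uniq //.
rewrite (count_flatten_map (p := fun f => (w \in pwords (dsize P)) && precb w f)); last first.
  move=> f; rewrite mem_Lin => /and3P[_ _ /eqP size_f].
  by rewrite count_uniq_mem ?(filter_uniq _ (pwords_uniq _)) // mem_filter size_f andbC.
rewrite mem_WLin -mem_pwords.
by case: (w \in pwords _) => /=; rewrite ?andbF ?count_pred0 // andbT count_prec_Lin.
Qed.

Lemma phi'_inj (x : fsum K dposet) : all (fun p => is_wpp p.2) x ->
  (forall w, coef (lin phi' x) w = 0) -> forall P, coef x P = 0.
Proof.
move=> /allP x_wpp phi'_x0.
have wpp_supp Q : Q \in map snd x -> is_wpp Q by case/mapP => p /x_wpp wp ->.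
suff coef0 m P : (inversion_weight (qle P) < m)%N -> coef x P = 0.
  by move=> P; exact: (coef0 _ P (ltnSn _)).
elim: m P => // m IHm P lt_Pm.
have [P_x|] := boolP (P \in map snd x); last exact: coef_notin.
have wP := wpp_supp P P_x.
rewrite -[RHS](phi'_x0 (canonical_word P)) coef_lin.
rewrite (sum_coef_undup x (fun Q => coef (phi' (K := K) Q) (canonical_word P))).
rewrite (bigD1_seq P) ?undup_uniq ?mem_undup //= big_seq_cond big1 ?addr0.
  by rewrite /phi' coef_ones count_uniq_mem ?WLin_uniq ?canonical_word_WLin // mulr1.
move=> Q /andP[Q_x neq_QP]; rewrite /phi' coef_ones count_uniq_mem ?WLin_uniq //.
case: (boolP (canonical_word P \in WLin Q)) => [cP_WLin|]; last by rewrite mulr0.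
rewrite mem_undup in Q_x; rewrite IHm ?mul0r // -ltnS (leq_trans _ lt_Pm) // ltnS.
by apply: canonical_word_WLin_lt; rewrite 1?eq_sym ?wpp_supp.
Qed.

Definition phi'_image (y : fsum K (seq nat)) : Prop :=
  exists2 x : fsum K dposet, all (fun p => is_wpp p.2) x &
    forall w, coef (lin phi' x) w = coef y w.

Lemma eq_phi'_image y y' : (forall w, coef y w = coef y' w) ->
  phi'_image y -> phi'_image y'.
Proof. by move=> eq_y [x x_wpp phi'_x]; exists x => // w; rewrite phi'_x. Qed.

Lemma phi'_image_cat y1 y2 : phi'_image y1 -> phi'_image y2 -> phi'_image (y1 ++ y2).
Proof.
move=> [x1 x1_wpp phi'_x1] [x2 x2_wpp phi'_x2]; exists (x1 ++ x2).
  by rewrite all_cat x1_wpp.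
by move=> w; rewrite /lin map_cat flatten_cat -!/(lin _ _) !coef_cat phi'_x1 phi'_x2.
Qed.

Lemma phi'_image_scale a y : phi'_image y -> phi'_image (scale_fsum a y).
Proof.
move=> [x x_wpp phi'_x]; exists (scale_fsum a x); first by rewrite all_map.
by move=> w; rewrite coef_lin_scale_fsum coef_scale_fsum phi'_x.
Qed.

Lemma phi'_image_span y : (forall p, p \in y -> phi'_image [:: (1, p.2)]) -> phi'_image y.
Proof.
elim: y => [_|[a w] y IHy img_y]; first by exists [::].
apply: (@eq_phi'_image (scale_fsum a [:: (1, w)] ++ y)).
  move=> c; rewrite coef_cat coef_scale_fsum !coef_cons /coef big_nil !addr0.
  by case: (w == c); rewrite ?mulr1 ?mulr0.
apply: phi'_image_cat; first by apply/phi'_image_scale/(img_y (a, w)); rewrite mem_head.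
by apply: IHy => p p_y; apply: img_y; rewrite inE p_y orbT.
Qed.

Lemma phi'_image_phi' P : is_wpp P -> phi'_image (phi' P).
Proof.
by move=> wP; exists [:: (1, P)]; rewrite /= ?wP // => w; rewrite coef_lin big_seq1 mul1r.
Qed.

Lemma phi'_image_word w : packed w -> phi'_image [:: (1, w)].
Proof.
move=> w_packed; have [d] := ubnP (size w * size w + size w * size w - word_weight w).
elim: d w w_packed => // d IHd w w_packed lt_d.
set S := [seq g <- WLin (word_wpp w) | g != w].
have w_WLin : w \in WLin (word_wpp w).
  by have := canonical_word_WLin (word_wpp_is_wpp w); rewrite canonical_word_word_wpp.
have img_S : phi'_image (ones K S).
  apply: phi'_image_span => _ /mapP[g + ->]; rewrite mem_filter => /andP[neq_gw g_WLin].
  have size_g : size g = size w := size_WLin g_WLin.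
  apply: IHd; first by move: g_WLin; rewrite mem_WLin => /and3P[].
  have := WLin_word_wpp_gt w_packed g_WLin neq_gw.
  have := inversion_weight_bound (@word_rel (size g) g); rewrite -/(word_weight g) size_g /=.
  lia.
apply: (@eq_phi'_image (phi' (word_wpp w) ++ scale_fsum (-1) (ones K S))); last first.
  by apply: phi'_image_cat; [exact/phi'_image_phi'/word_wpp_is_wpp | exact: phi'_image_scale].
move=> c; rewrite coef_cat coef_scale_fsum /phi' !coef_ones coef_cons /coef big_nil addr0 mulN1r.
case: (eqVneq w c) => [<-|neq_wc].
  have -> : count_mem w S = 0%N by apply/count_memPn; rewrite mem_filter eqxx.
  by rewrite count_uniq_mem ?WLin_uniq // w_WLin subr0.
rewrite [count_mem c S]count_filter (@eq_count _ _ (pred1 c)) ?subrr // => g /=.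
by case: eqP => // ->; rewrite eq_sym neq_wc.
Qed.

Lemma phi'_surj y : all (fun p => packed p.2) y -> phi'_image y.
Proof. by move=> /allP y_packed; apply: phi'_image_span => p /y_packed; exact: phi'_image_word. Qed.

End HopfMorphism.

Unset Implicit Arguments.
Local Open Scope ring_scope.

Theorem mainTheorem7 (K : fieldType) :
  [/\
   (* phi' preserves the unit *)
   (forall w, coef (phi' (K := K) dp_empty) w = coef [:: (1, [::])] w),
   (* phi' preserves the counit *)
   (forall P, is_wpp P -> coef (phi' (K := K) P) [::] = (dsize P == 0%N)%:R),
   (* phi' is multiplicative *)
   (forall P Q, is_wpp P -> is_wpp Q -> forall w,
      coef (phi' (K := K) (dp_mul P Q)) w = coef (wmul (phi' P) (phi' Q)) w) &
   (* phi' is comultiplicative: (phi' (x) phi') o Delta = Delta o phi' *)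
   (forall P, is_wpp P -> forall uv,
      coef (lin2 phi' phi' (dp_delta (K := K) P)) uv = coef (lin wdelta (phi' (K := K) P)) uv)] /\
   (* phi' is bijective from H_WPP onto WQSym *)
   (
   (* phi' is injective on H_WPP *)
   (forall x : fsum K dposet, all (fun p => is_wpp p.2) x ->
      (forall w, coef (lin phi' x) w = 0) -> forall P, coef x P = 0) /\
   (* phi' is onto WQSym (span of packed words) *)
   (forall y : fsum K (seq nat), all (fun p => packed p.2) y ->
      exists2 x : fsum K dposet, all (fun p => is_wpp p.2) x &
        forall w, coef (lin phi' x) w = coef y w)) /\
   (* phi' = psi o phi *)
   (forall P, is_wpp P -> forall w,
      coef (phi' (K := K) P) w = coef (lin psi (phi (K := K) P)) w).
Proof.
split; first split.
- exact: phi'_unit.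
- by move=> P _; exact: phi'_counit.
- by move=> P Q _ _ w; exact: phi'_mul.
- by move=> P _ uv; exact: phi'_comul.
split; first split.
- exact: phi'_inj.
- exact: phi'_surj.
exact: phi'_psi_phi.
Qed.
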